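(* Let $G$ be an abelian group and $A$ an algebra in ${}^{G}_{G}\mathcal{YD}$ which is semisimple as a $\mathbb{C}$-algebra. Let $K\subset A$ be a central subfield which is invariant (i.e. $G$-fixed and of trivial $G$-degree) and over which $A$ is finite-dimensional. Then $A$ is projective as a right module over $A^{\underline{op}}\underline{\otimes}_K A$, where $A$ is a module via $m\cdot(a\otimes b)=(m_{-1}\cdot a)m_0b$.
   Context: ${}^{G}_{G}\mathcal{YD}$ is the category of Yetter–Drinfeld modules over $\mathbb{C}G$: $G$-modules with a $\mathbb{C}G$-coaction $v\mapsto v_{-1}\otimes v_0$ (for $G$ abelian, action and coaction commute), with braiding $v\otimes w\mapsto (v_{-1}w)\otimes v_0$. For algebras $A,B$ in this category, the braided tensor product $A\underline{\otimes}B$ has product $(a\otimes b)(a'\otimes b')=a(b_{-1}a')\otimes b_0b'$; $A^{\underline{op}}$ is $A$ with product $a\cdot_{\underline{op}}b=(a_{-1}b)a_0$; $A^{\underline{op}}\underline{\otimes}_KA$ is the analogous braided tensor product over $K$. *)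

From HB Require Import structures.
From mathcomp Require Import all_boot all_order all_algebra.
From mathcomp Require Import reals Rstruct complex.
Set Implicit Arguments. Unset Strict Implicit. Unset Printing Implicit Defensive.
Import GRing.Theory.
Local Open Scope ring_scope.

Definition CC : numClosedFieldType := (Rdefinitions.R)[i].

Section YD.
(* G : an abelian group (written additively: identity 0, group law +).
   A : a (unital, associative) C-algebra.
   act g a   : the G-action on A.
   comp a g  : the g-homogeneous component of a; the CG-coaction is
               a |-> a_{-1} (x) a_0 = \sum_(g <- supp a) g (x) comp a g,
   where supp a is a duplicate-free list containing every g with
   comp a g <> 0 (the value of every sum below does not depend on the choice
   of such a list, since comp a g = 0 outside it). *)
Variables (G : zmodType) (A : algType CC).
Variables (act : G -> A -> A) (comp : A -> G -> A) (supp : A -> seq G).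

Definition is_YD_algebra : Prop :=
  [/\ (forall a, act 0 a = a),
      (forall g h a, act (g + h) a = act g (act h a)),
      (forall g (c : CC) a b, act g (c *: a + b) = c *: act g a + act g b) &
   [/\ (forall g (c : CC) a b, comp (c *: a + b) g = c *: comp a g + comp b g),
      (forall a, uniq (supp a) /\ (forall g, g \notin supp a -> comp a g = 0)),
      (forall a, \sum_(g <- supp a) comp a g = a) &
      (forall a g h, comp (comp a g) h = if h == g then comp a g else 0) ]] /\
  (* Yetter-Drinfeld compatibility (for G abelian: action and coaction commute) *)
  [/\ (forall g a h, comp (act g a) h = act g (comp a h)),
      (forall g a b, act g (a * b) = act g a * act g b),
      (forall g, act g 1 = 1),
      (forall g, comp 1 g = if g == 0 then 1 else 0) &
      (forall a b g h, comp a g = a -> comp b h = b -> comp (a * b) (g + h) = a * b) ].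

(* The braided opposite product  a .op b = (a_{-1} . b) a_0. *)
Definition opmul (a b : A) : A := \sum_(g <- supp a) act g b * comp a g.

Definition central_subfield (K : pred A) : Prop :=
  [/\ (forall c : CC, c%:A \in K),
      (forall x y, x \in K -> y \in K -> x - y \in K),
      (forall x y, x \in K -> y \in K -> x * y \in K),
      (forall x, x \in K -> x != 0 -> exists2 y, y \in K & x * y = 1) &
      (forall x a, x \in K -> x * a = a * x) ].

Definition invariant_sub (K : pred A) : Prop :=
  forall k, k \in K -> (forall g, act g k = k) /\ comp k 0 = k.

Definition findim_over (K : pred A) : Prop :=
  exists s : seq A, forall a, exists c : seq A,
    all (fun x => x \in K) c /\ a = \sum_(i < size s) c`_i * s`_i.

Definition left_ideal (I : pred A) : Prop :=
  [/\ 0 \in I, (forall x y, x \in I -> y \in I -> x + y \in I) &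
      (forall a x, x \in I -> a * x \in I)].

Definition semisimple_alg : Prop :=
  forall I : pred A, left_ideal I ->
    exists J : pred A, [/\ left_ideal J,
      (forall x, x \in I -> x \in J -> x = 0) &
      (forall a, exists x y, [/\ x \in I, y \in J & a = x + y])].

(* A right B-module M is the same thing as an abelian group M with
   rho m a = m.(a (x) 1)  and  sig m b = m.(1 (x) b), subject to the relations
   of B:  (a (x) 1)(a' (x) 1) = (a .op a') (x) 1,  (1 (x) b)(1 (x) b') = 1 (x) bb',
   (a (x) 1)(1 (x) b) = a (x) b,  (1 (x) b)(a' (x) 1) = (b_{-1} a') (x) b_0,
   biadditivity, and K-balancedness k (x) 1 = 1 (x) k; then
   m.(a (x) b) = sig (rho m a) b. *)
Definition is_rBmod (K : pred A) (M : zmodType) (rho sig : M -> A -> M) : Prop :=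
  [/\ (forall m m' a, rho (m + m') a = rho m a + rho m' a),
      (forall m a a', rho m (a + a') = rho m a + rho m a'),
      (forall m m' b, sig (m + m') b = sig m b + sig m' b),
      (forall m b b', sig m (b + b') = sig m b + sig m b') &
   [/\ (forall m, rho m 1 = m),
      (forall m, sig m 1 = m) &
   [/\ (forall m a a', rho (rho m a) a' = rho m (opmul a a')),
       (forall m b b', sig (sig m b) b' = sig m (b * b')),
       (forall m b a', rho (sig m b) a'
                        = \sum_(g <- supp b) sig (rho m (act g a')) (comp b g)) &
       (forall m k, k \in K -> rho m k = sig m k)]]].

Definition is_rBhom (M N : zmodType) (rhoM sigM : M -> A -> M)
  (rhoN sigN : N -> A -> N) (f : M -> N) : Prop :=
  [/\ (forall m m', f (m + m') = f m + f m'),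
      (forall m a, f (rhoM m a) = rhoN (f m) a) &
      (forall m b, f (sigM m b) = sigN (f m) b)].

Definition rB_projective (K : pred A) (P : zmodType) (rhoP sigP : P -> A -> P) : Prop :=
  forall (M N : zmodType) (rhoM sigM : M -> A -> M) (rhoN sigN : N -> A -> N)
         (p : M -> N) (f : P -> N),
    is_rBmod K rhoM sigM -> is_rBmod K rhoN sigN ->
    is_rBhom rhoM sigM rhoN sigN p -> (forall n, exists m, p m = n) ->
    is_rBhom rhoP sigP rhoN sigN f ->
    exists h : P -> M, is_rBhom rhoP sigP rhoM sigM h /\ (forall x, p (h x) = f x).

Definition A_rho (m a : A) : A := opmul m a.
Definition A_sig (m b : A) : A := m * b.

End YD.

From HB Require Import structures.
From mathcomp Require Import all_boot all_order all_algebra.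
From mathcomp Require Import reals Rstruct complex.
From Stdlib Require Import Classical_Prop.
Set Implicit Arguments. Unset Strict Implicit. Unset Printing Implicit Defensive.
Import GRing.Theory Num.Theory.
Local Open Scope ring_scope.

(* Since A is semisimple and K has characteristic 0, the trace form
   (x, y) |-> Tr_{A/K}(x y) is nondegenerate: its radical is a left ideal,
   hence of the form A e for an idempotent e of trace 0, and such an e vanishes.
   Take a K-basis (v_i) of A of homogeneous elements, v_i of degree g_i; as the
   trace form only pairs degree g with degree -g, the dual basis (u_i) can be
   taken homogeneous of degree -g_i.  Then sum_i u_i (x) v_i is a braided
   separability element: in every right module M, the averaging map
   m |-> sum_i m.(u_i (x) v_i) lands in the invariants
   {m | m.(a (x) 1) = m.(1 (x) a)} and fixes them.  So invariants lift along
   surjections, and f lifts along p as m |-> x.(1 (x) m) for any invariant x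
   above f 1. *)

Lemma mxtrace_idem (F : fieldType) m (E : 'M[F]_m) :
  E *m E = E -> \tr E = (\rank E)%:R.
Proof.
move=> EE; have defE := mulmx_ebase E.
set L := col_ebase E in defE; set U := row_ebase E in defE.
set r := \rank E in defE *; set P := (pid_mx r : 'M[F]_m) in defE.
have uL : L \in unitmx by exact: col_ebase_unit.
have uU : U \in unitmx by exact: row_ebase_unit.
have r_le_m : (r <= m)%N by exact: rank_leq_row.
have PP : P *m P = P by rewrite pid_mx_id.
have PULP : P *m U *m L *m P = P.
  have : L *m (P *m (U *m L) *m P) *m U = L *m P *m U.
    by rewrite defE -{1}EE -defE !mulmxA.
  move/(congr1 (fun X => invmx L *m X *m invmx U)).
  by rewrite /= !mulmxA mulVmx // mul1mx !mulmxK // mulVmx // mul1mx.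
have -> : \tr E = \tr P.
  by rewrite -defE -mulmxA mxtrace_mulC -{1}PP -!mulmxA mxtrace_mulC !mulmxA PULP.
rewrite /mxtrace (eq_bigr (fun i : 'I_m => if (i < r)%N then 1 else 0)) => [|i _].
  by rewrite -big_mkcond big_ord_narrow // sumr_const card_ord.
by rewrite /P mxE eqxx; case: (i < r)%N.
Qed.

Lemma mxtrace_idem_eq0 (F : fieldType) m (E : 'M[F]_m) :
  [pchar F] =i pred0 -> E *m E = E -> \tr E = 0 -> E = 0.
Proof.
move=> /pcharf0P char0 EE; rewrite mxtrace_idem // => /eqP.
by rewrite char0 mxrank_eq0 => /eqP.
Qed.

Lemma semisimple_left_ideal_unit (A : algType CC) (I : pred A) :
  semisimple_alg A -> left_ideal I ->
  exists2 e0, e0 \in I & forall x, x \in I -> x * e0 = x.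
Proof.
move=> SS I_ideal; have [J [[_ _ JM] IJ0 IJ]] := SS I I_ideal.
have [e0 [f0 [Ie0 Jf0 def1]]] := IJ 1; case: I_ideal => _ ID IM.
exists e0 => // x Ix.
have xf0 : x * f0 = 0.
  apply: IJ0; last exact: JM.
  have -> : x * f0 = x + (-1) * (x * e0).
    by rewrite mulN1r -{2}[x]mulr1 def1 mulrDr addrAC subrr add0r.
  exact: ID Ix (IM _ _ (IM x _ Ie0)).
by rewrite -{2}[x]mulr1 def1 mulrDr xf0 addr0.
Qed.

Section SeparableYD.
Variables (G : zmodType) (A : algType CC).
Variables (act : G -> A -> A) (comp : A -> G -> A) (supp : A -> seq G).
Variable K : pred A.
Hypothesis YD : is_YD_algebra act comp supp.

Local Notation opm := (opmul act comp supp).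

Definition homog (g : G) (a : A) : Prop := comp a g = a.

Lemma act0 a : act 0 a = a. Proof. by case: YD => -[]. Qed.
Lemma actD g h a : act (g + h) a = act g (act h a). Proof. by case: YD => -[]. Qed.
Lemma compL g c a b : comp (c *: a + b) g = c *: comp a g + comp b g.
Proof. by case: YD => -[_ _ _ []]. Qed.
Lemma supp_uniq a : uniq (supp a). Proof. by case: YD => -[_ _ _ [_ /(_ a) []]]. Qed.
Lemma comp_notin_supp a g : g \notin supp a -> comp a g = 0.
Proof. by case: YD => -[_ _ _ [_ /(_ a) [_ H] _ _]] _; apply: H. Qed.
Lemma sum_comp a : \sum_(g <- supp a) comp a g = a.
Proof. by case: YD => -[_ _ _ []]. Qed.
Lemma comp_comp a g h : comp (comp a g) h = if h == g then comp a g else 0.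
Proof. by case: YD => -[_ _ _ []]. Qed.
Lemma homog1 : homog 0 1.
Proof. by rewrite /homog; case: YD => _ [_ _ _ -> _]; rewrite eqxx. Qed.
Lemma homogM a b g h : homog g a -> homog h b -> homog (g + h) (a * b).
Proof. by case: YD => _ [_ _ _ _]; apply. Qed.

Lemma homog_comp a g : homog g (comp a g). Proof. by rewrite /homog comp_comp eqxx. Qed.

Lemma compD a b g : comp (a + b) g = comp a g + comp b g.
Proof. by have := compL g 1 a b; rewrite !scale1r. Qed.

Lemma comp0 g : comp 0 g = 0.
Proof. by apply: (addrI (comp 0 g)); rewrite -compD !addr0. Qed.

Lemma comp_sum (I : Type) (r : seq I) (P : pred I) (F : I -> A) g :
  comp (\sum_(i <- r | P i) F i) g = \sum_(i <- r | P i) comp (F i) g.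
Proof. by apply: (big_morph (comp^~ g)) => [x y|]; rewrite ?compD ?comp0. Qed.

Lemma sum_supp1 (M : zmodType) (F : G -> A -> M) z g :
  (forall h, h != g -> F h (comp z h) = 0) -> F g 0 = 0 ->
  \sum_(h <- supp z) F h (comp z h) = F g (comp z g).
Proof.
move=> Fh0 Fg0; have [gz|gNz] := boolP (g \in supp z).
  by rewrite (bigD1_seq g) ?supp_uniq //= big1 ?addr0 // => h /Fh0.
rewrite comp_notin_supp // Fg0 big_seq big1 // => h hz; apply: Fh0.
by apply: contraNneq gNz => <-.
Qed.

Lemma sum_supp_homog (M : zmodType) (F : G -> A -> M) z d :
  homog d z -> (forall h, F h 0 = 0) -> \sum_(h <- supp z) F h (comp z h) = F d z.
Proof.
move=> zd F0; rewrite (sum_supp1 (g := d)) ?zd // => h hd.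
by rewrite -zd comp_comp (negbTE hd).
Qed.

Lemma sum_comp_superset (D : seq G) a :
  uniq D -> {subset supp a <= D} -> \sum_(g <- D) comp a g = a.
Proof.
move=> uD sD; rewrite -[RHS]sum_comp (bigID (mem (supp a))) /=.
rewrite [X in _ + X]big1 => [|g /comp_notin_supp //]; rewrite addr0 -big_filter.
apply/perm_big/uniq_perm; rewrite ?filter_uniq ?supp_uniq // => g.
by rewrite mem_filter andb_idr //; apply: sD.
Qed.

Lemma opmul_homog u d b : homog d u -> opm u b = act d b * u.
Proof.
move=> ud; apply: (sum_supp_homog (F := fun g x => act g b * x)) => // h.
exact: mulr0.
Qed.

Lemma opmul1l a : opm 1 a = a.
Proof. by rewrite (opmul_homog _ homog1) act0 mulr1. Qed.

Hypothesis CK : central_subfield K.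

Lemma K_scalar (c : CC) : c%:A \in K. Proof. by case: CK. Qed.
Lemma KB x y : x \in K -> y \in K -> x - y \in K.
Proof. by case: CK => _ + _ _ _; apply. Qed.
Lemma KM x y : x \in K -> y \in K -> x * y \in K.
Proof. by case: CK => _ _ + _ _; apply. Qed.
Lemma K_inv x : x \in K -> x != 0 -> exists2 y, y \in K & x * y = 1.
Proof. by case: CK => _ _ _ + _; apply. Qed.
Lemma K_central k a : k \in K -> k * a = a * k.
Proof. by case: CK => _ _ _ _ +; apply. Qed.

Lemma K0 : 0 \in K. Proof. by rewrite -(scale0r 1) K_scalar. Qed.
Lemma K1 : 1 \in K. Proof. by rewrite -(scale1r 1) K_scalar. Qed.
Lemma KN x : x \in K -> - x \in K. Proof. by rewrite -sub0r; apply: KB K0. Qed.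
Lemma KD x y : x \in K -> y \in K -> x + y \in K.
Proof. by move=> Kx /KN Ky; rewrite -[y]opprK KB. Qed.
Lemma K_sum (I : Type) (r : seq I) (P : pred I) (F : I -> A) :
  (forall i, P i -> F i \in K) -> \sum_(i <- r | P i) F i \in K.
Proof. by move=> KF; apply: (big_ind (fun x => x \in K)) => //; [exact: K0 | exact: KD]. Qed.

Definition Kfield := {x : A | x \in K}.
HB.instance Definition _ := Choice.on Kfield.

Definition Kfield0 : Kfield := exist _ 0 K0.
Definition Kfield_opp (x : Kfield) : Kfield := exist _ (- val x) (KN (valP x)).
Definition Kfield_add (x y : Kfield) : Kfield :=
  exist _ (val x + val y) (KD (valP x) (valP y)).

Lemma Kfield_addA : associative Kfield_add.
Proof. by move=> x y z; apply: val_inj; rewrite /= addrA. Qed.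
Lemma Kfield_addC : commutative Kfield_add.
Proof. by move=> x y; apply: val_inj; rewrite /= addrC. Qed.
Lemma Kfield_add0 : left_id Kfield0 Kfield_add.
Proof. by move=> x; apply: val_inj; rewrite /= add0r. Qed.
Lemma Kfield_addN : left_inverse Kfield0 Kfield_opp Kfield_add.
Proof. by move=> x; apply: val_inj; rewrite /= addNr. Qed.
HB.instance Definition _ :=
  GRing.isZmodule.Build Kfield Kfield_addA Kfield_addC Kfield_add0 Kfield_addN.

Definition Kfield1 : Kfield := exist _ 1 K1.
Definition Kfield_mul (x y : Kfield) : Kfield :=
  exist _ (val x * val y) (KM (valP x) (valP y)).

Lemma Kfield_mulA : associative Kfield_mul.
Proof. by move=> x y z; apply: val_inj; rewrite /= mulrA. Qed.
Lemma Kfield_mulC : commutative Kfield_mul.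
Proof. by move=> x y; apply: val_inj; rewrite /= K_central ?(valP x). Qed.
Lemma Kfield_mul1 : left_id Kfield1 Kfield_mul.
Proof. by move=> x; apply: val_inj; rewrite /= mul1r. Qed.
Lemma Kfield_mulDl : left_distributive Kfield_mul +%R.
Proof. by move=> x y z; apply: val_inj; rewrite /= mulrDl. Qed.
Lemma Kfield1_neq0 : Kfield1 != 0.
Proof. by apply/eqP => /(congr1 val) /eqP; rewrite oner_eq0. Qed.
HB.instance Definition _ := GRing.Zmodule_isComNzRing.Build Kfield
  Kfield_mulA Kfield_mulC Kfield_mul1 Kfield_mulDl Kfield1_neq0.

Lemma Kfield_inv_ex (x : Kfield) :
  exists y : Kfield, if x == 0 then y == 0 else y * x == 1.
Proof.
have [_ | x0] := eqVneq x 0; first by exists 0.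
have vx0 : val x != 0 by apply: contra_neq x0 => vx0; apply: val_inj.
have [y Ky xy] := K_inv (valP x) vx0.
by exists (exist _ y Ky); apply/eqP/val_inj; rewrite /= K_central.
Qed.

Definition Kfield_inv (x : Kfield) : Kfield := xchoose (Kfield_inv_ex x).

Lemma Kfield_mulV x : x != 0 -> Kfield_inv x * x = 1.
Proof.
move=> x0; rewrite /Kfield_inv.
by move: (xchoose _) (xchooseP (Kfield_inv_ex x)) => y; rewrite (negbTE x0) => /eqP.
Qed.
Lemma Kfield_inv0 : Kfield_inv 0 = 0.
Proof.
rewrite /Kfield_inv.
by move: (xchoose _) (xchooseP (Kfield_inv_ex 0)) => y; rewrite eqxx => /eqP.
Qed.
HB.instance Definition _ :=
  GRing.ComNzRing_isField.Build Kfield Kfield_mulV Kfield_inv0.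

Lemma val_Kfield_sum (I : Type) (r : seq I) (P : pred I) (F : I -> Kfield) :
  val (\sum_(i <- r | P i) F i) = \sum_(i <- r | P i) val (F i).
Proof. exact: (big_morph val). Qed.

Lemma val_Kfield_natr k : val (k%:R : Kfield) = k%:R.
Proof. by elim: k => // k IHk; rewrite !mulrS /= IHk. Qed.

Lemma Kfield_char0 : [pchar Kfield] =i pred0.
Proof.
apply/pcharf0P => k; apply/idP/idP => [/eqP/(congr1 val) | /eqP -> //].
rewrite val_Kfield_natr /= => kA0; apply/negPn/negP => k_neq0.
have kC0 : k%:R != 0 :> CC by rewrite pnatr_eq0.
move: (oner_neq0 A).
by rewrite -(scale1r 1) -(mulVf kC0) -scalerA scaler_nat kA0 scaler0 eqxx.
Qed.

Hypothesis IK : invariant_sub act comp K.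

Lemma K_act k g : k \in K -> act g k = k. Proof. by case/IK. Qed.
Lemma K_homog k : k \in K -> homog 0 k. Proof. by case/IK. Qed.

Lemma comp_Kmul k y g : k \in K -> comp (k * y) g = k * comp y g.
Proof.
move=> Kk; rewrite -(sum_comp y) mulr_sumr !comp_sum mulr_sumr; apply: eq_bigr => h _.
have kyh : homog h (k * comp y h).
  by have := homogM (K_homog Kk) (homog_comp y h); rewrite add0r.
by rewrite -{1}kyh !comp_comp; case: eqP => _; rewrite ?kyh ?mulr0.
Qed.

Lemma opmul_K u k : k \in K -> opm u k = k * u.
Proof.
move=> Kk; rewrite /opmul (eq_bigr (fun g => k * comp u g)) => [|g _].
  by rewrite -mulr_sumr sum_comp.
by rewrite K_act.
Qed.

Definition rB_invariant (M : zmodType) (rho sig : M -> A -> M) (m : M) : Prop :=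
  forall a, rho m a = sig m a.

Section RightModule.
Variables (M : zmodType) (rho sig : M -> A -> M).
Hypothesis HM : is_rBmod act comp supp K rho sig.

Lemma rhoDl m m' a : rho (m + m') a = rho m a + rho m' a. Proof. by case: HM. Qed.
Lemma rhoDr m a a' : rho m (a + a') = rho m a + rho m a'. Proof. by case: HM. Qed.
Lemma sigDl m m' b : sig (m + m') b = sig m b + sig m' b. Proof. by case: HM. Qed.
Lemma sigDr m b b' : sig m (b + b') = sig m b + sig m b'. Proof. by case: HM. Qed.
Lemma sig1 m : sig m 1 = m. Proof. by case: HM => _ _ _ _ []. Qed.
Lemma rho_opmul m a a' : rho (rho m a) a' = rho m (opm a a').
Proof. by case: HM => _ _ _ _ [_ _ []]. Qed.
Lemma sigM m b b' : sig (sig m b) b' = sig m (b * b').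
Proof. by case: HM => _ _ _ _ [_ _ []]. Qed.
Lemma rho_sig m b a :
  rho (sig m b) a = \sum_(g <- supp b) sig (rho m (act g a)) (comp b g).
Proof. by case: HM => _ _ _ _ [_ _ []]. Qed.
Lemma rho_K m k : k \in K -> rho m k = sig m k.
Proof. by case: HM => _ _ _ _ [_ _ [_ _ _ +]]; apply. Qed.

Lemma rho0l a : rho 0 a = 0.
Proof. by apply: (addrI (rho 0 a)); rewrite -rhoDl !addr0. Qed.
Lemma rho0r m : rho m 0 = 0.
Proof. by apply: (addrI (rho m 0)); rewrite -rhoDr !addr0. Qed.
Lemma sig0l b : sig 0 b = 0.
Proof. by apply: (addrI (sig 0 b)); rewrite -sigDl !addr0. Qed.
Lemma sig0r m : sig m 0 = 0.
Proof. by apply: (addrI (sig m 0)); rewrite -sigDr !addr0. Qed.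

Lemma rho_suml (I : Type) (r : seq I) (P : pred I) (F : I -> M) a :
  rho (\sum_(i <- r | P i) F i) a = \sum_(i <- r | P i) rho (F i) a.
Proof. by apply: (big_morph (rho^~ a)) => [x y|]; rewrite ?rhoDl ?rho0l. Qed.
Lemma rho_sumr (I : Type) (r : seq I) (P : pred I) (F : I -> A) m :
  rho m (\sum_(i <- r | P i) F i) = \sum_(i <- r | P i) rho m (F i).
Proof. exact: (big_morph (rho m) (rhoDr m) (rho0r m)). Qed.
Lemma sig_suml (I : Type) (r : seq I) (P : pred I) (F : I -> M) b :
  sig (\sum_(i <- r | P i) F i) b = \sum_(i <- r | P i) sig (F i) b.
Proof. by apply: (big_morph (sig^~ b)) => [x y|]; rewrite ?sigDl ?sig0l. Qed.
Lemma sig_sumr (I : Type) (r : seq I) (P : pred I) (F : I -> A) m :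
  sig m (\sum_(i <- r | P i) F i) = \sum_(i <- r | P i) sig m (F i).
Proof. exact: (big_morph (sig m) (sigDr m) (sig0r m)). Qed.

Lemma rho_sig_homog m b a d : homog d b -> rho (sig m b) a = sig (rho m (act d a)) b.
Proof.
move=> bd; rewrite rho_sig.
apply: (sum_supp_homog (F := fun g x => sig (rho m (act g a)) x)) => // h.
exact: sig0r.
Qed.

Lemma sig_Kmul m k b : k \in K -> sig m (k * b) = sig (rho m k) b.
Proof. by move=> Kk; rewrite -sigM rho_K. Qed.

Lemma rho_Kmul m a k : k \in K -> rho (rho m a) k = rho m (k * a).
Proof. by move=> Kk; rewrite rho_opmul opmul_K. Qed.

Lemma rBhom_sig_invariant x : rB_invariant rho sig x ->
  is_rBhom (A_rho act comp supp) (@A_sig A) rho sig (sig x).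
Proof.
move=> x_inv; split => [m m' | m a | m b]; first exact: sigDr.
  rewrite /A_rho /opmul sig_sumr rho_sig; apply: eq_bigr => g _.
  by rewrite -sigM -x_inv.
by rewrite /A_sig sigM.
Qed.

Lemma rBhom_one_invariant f :
  is_rBhom (A_rho act comp supp) (@A_sig A) rho sig f -> rB_invariant rho sig (f 1).
Proof. by case=> _ frho fsig a; rewrite -frho -fsig /A_rho /A_sig opmul1l mul1r. Qed.

End RightModule.

Definition Kspan n (v : 'I_n -> A) : Prop :=
  forall a, exists2 c : 'I_n -> A, (forall i, c i \in K) & a = \sum_i c i * v i.

Definition Kfree n (v : 'I_n -> A) : Prop :=
  forall c : 'I_n -> A, (forall i, c i \in K) -> \sum_i c i * v i = 0 ->
    forall i, c i = 0.

Lemma Kspan_homog_Kbasis n (v : 'I_n -> A) (e : 'I_n -> G) :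
  (forall i, homog (e i) (v i)) -> Kspan v ->
  exists m (w : 'I_m -> A) (f : 'I_m -> G),
    [/\ forall i, homog (f i) (w i), Kspan w & Kfree w].
Proof.
elim: n v e => [|n IHn] v e ve v_span.
  by exists 0, v, e; split => // c _ _ [].
have [v_free | v_dep] := classic (Kfree v); first by exists n.+1, v, e.
have [c Kc [c_rel [k ck0]]] : exists2 c : 'I_n.+1 -> A, (forall i, c i \in K) &
    \sum_i c i * v i = 0 /\ exists k, c k != 0.
  apply: NNPP => no_rel; apply: v_dep => c Kc c_rel i.
  by apply: NNPP => /eqP ci0; apply: no_rel; exists c; last by split; last exists i.
have [y Ky cky] := K_inv (Kc k) ck0.
pose vk j := v (lift k j); pose ck j := c (lift k j).
have vk_span : v k = \sum_j - (y * ck j) * vk j.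
  move: c_rel; rewrite (bigD1_ord k) //= => /eqP; rewrite addr_eq0 => /eqP ckvk.
  rewrite -[v k]mul1r -cky -(K_central _ Ky) -mulrA ckvk mulrN mulr_sumr -sumrN.
  by apply: eq_bigr => j _; rewrite mulrA mulNr.
apply: (IHn vk (fun j => e (lift k j))) => [j | a]; first exact: ve.
have [d Kd ->] := v_span a.
exists (fun j => d (lift k j) - d k * (y * ck j)) => [j|].
  by apply: KB (Kd _) (KM (Kd _) (KM Ky (Kc _))).
rewrite (bigD1_ord k) //= vk_span mulr_sumr -big_split /=; apply: eq_bigr => j _.
by rewrite mulrBl mulNr mulrN mulrA addrC.
Qed.

Hypothesis FD : findim_over K.

Lemma exists_homog_Kspan :
  exists n (v : 'I_n -> A) (e : 'I_n -> G), (forall i, homog (e i) (v i)) /\ Kspan v.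
Proof.
have [s s_span] := FD.
pose D := undup (flatten (map supp s)).
pose I := ('I_(size s) * 'I_(size D))%type.
pose w (p : I) := comp s`_p.1 D`_p.2.
pose f (p : I) := D`_p.2.
suff w_span a : exists2 c : I -> A, (forall p, c p \in K) & a = \sum_p c p * w p.
  exists #|{: I}|, (fun k => w (enum_val k)), (fun k => f (enum_val k)).
  split => [k | a]; first exact: homog_comp.
  have [c Kc ->] := w_span a; exists (fun k => c (enum_val k)) => //.
  by rewrite (reindex (@enum_val I predT)) //=; exact: onW_bij _ (@enum_val_bij _).
have [c [/allP Kc ->]] := s_span a.
exists (fun p : I => c`_p.1) => [p|].
  have [lt_p_c | le_c_p] := ltnP p.1 (size c); first exact/Kc/mem_nth.
  by rewrite nth_default ?K0.
transitivity (\sum_(i < size s) \sum_(j < size D) c`_i * comp s`_i D`_j); last first.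
  by rewrite pair_big.
apply: eq_bigr => i _; rewrite -mulr_sumr; congr (_ * _).
rewrite -(big_mkord xpredT (fun j => comp s`_i D`_j)) -(big_nth 0 xpredT (comp s`_i)).
rewrite sum_comp_superset ?undup_uniq // => g g_supp; rewrite mem_undup.
by apply/flattenP; exists (supp s`_i); rewrite ?map_f ?mem_nth.
Qed.

Lemma exists_homog_Kbasis : exists n (v : 'I_n -> A) (e : 'I_n -> G),
  [/\ forall i, homog (e i) (v i), Kspan v & Kfree v].
Proof.
have [n [v [e [ve v_span]]]] := exists_homog_Kspan.
exact: Kspan_homog_Kbasis ve v_span.
Qed.

Hypothesis SS : semisimple_alg A.

Section Coordinates.
Variables (n : nat) (v : 'I_n -> A) (e : 'I_n -> G).
Hypotheses (v_homog : forall i, homog (e i) (v i)).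
Hypotheses (v_span : Kspan v) (v_free : Kfree v).

Lemma coord_ex a : exists c : {ffun 'I_n -> A},
  [forall i, c i \in K] && (a == \sum_i c i * v i).
Proof.
have [c Kc ->] := v_span a; exists (finfun c); apply/andP; split.
  by apply/forallP => i; rewrite ffunE.
by apply/eqP/eq_bigr => i _; rewrite ffunE.
Qed.

Definition coord a : 'I_n -> A := xchoose (coord_ex a).

Lemma coordK a i : coord a i \in K.
Proof. by have /andP[/forallP + _] := xchooseP (coord_ex a); apply. Qed.

Lemma coordE a : a = \sum_i coord a i * v i.
Proof. by have /andP[_ /eqP] := xchooseP (coord_ex a). Qed.

Lemma coord_unique a c : (forall i, c i \in K) -> a = \sum_i c i * v i ->
  forall i, coord a i = c i.
Proof.
move=> Kc def_a i; apply/eqP; rewrite -subr_eq0; apply/eqP.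
apply: (v_free (c := fun j => coord a j - c j)) => [j|].
  exact: KB (coordK a j) (Kc j).
rewrite (eq_bigr (fun j => coord a j * v j - c j * v j)) => [|j _]; last first.
  by rewrite mulrBl.
by rewrite sumrB -coordE -def_a subrr.
Qed.

Lemma coordD a b i : coord (a + b) i = coord a i + coord b i.
Proof.
apply: (coord_unique (c := fun j => coord a j + coord b j)) => [j|].
  exact: KD (coordK a j) (coordK b j).
rewrite {1}(coordE a) {1}(coordE b) -big_split.
by apply: eq_bigr => j _; rewrite mulrDl.
Qed.

Lemma coord0 i : coord 0 i = 0.
Proof.
apply: (coord_unique (c := fun=> 0)) => [j|]; first exact: K0.
by rewrite big1 // => j _; rewrite mul0r.
Qed.

Lemma coord_Kmul k a i : k \in K -> coord (k * a) i = k * coord a i.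
Proof.
move=> Kk; apply: (coord_unique (c := fun j => k * coord a j)) => [j|].
  exact: KM Kk (coordK a j).
by rewrite {1}(coordE a) mulr_sumr; apply: eq_bigr => j _; rewrite mulrA.
Qed.

Lemma coord_homog w g i : homog g w -> e i != g -> coord w i = 0.
Proof.
move=> wg eig; pose c j := if e j == g then coord w j else 0.
suff -> : coord w i = c i by rewrite /c (negbTE eig).
apply: coord_unique => [j|]; first by rewrite /c; case: ifP; rewrite ?coordK ?K0.
rewrite -{1}wg {1}(coordE w) comp_sum; apply: eq_bigr => j _.
rewrite comp_Kmul ?coordK // -{1}(v_homog j) comp_comp eq_sym /c.
by case: ifP => _; rewrite ?v_homog ?mulr0 ?mul0r.
Qed.

Lemma coordM w y k : coord (w * y) k = \sum_j coord w j * coord (v j * y) k.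
Proof.
apply: (coord_unique (c := fun k => \sum_j coord w j * coord (v j * y) k)) => [k'|].
  by apply: K_sum => j _; apply: KM; apply: coordK.
rewrite {1}(coordE w) mulr_suml.
under [RHS]eq_bigr do rewrite mulr_suml.
rewrite [RHS]exchange_big /=; apply: eq_bigr => j _.
rewrite -mulrA {1}(coordE (v j * y)) mulr_sumr.
by apply: eq_bigr => k' _; rewrite mulrA.
Qed.

Definition trK z := \sum_i coord (v i * z) i.

Lemma mem_trK z : trK z \in K.
Proof. by apply: K_sum => i _; apply: coordK. Qed.

Lemma trKD x y : trK (x + y) = trK x + trK y.
Proof. by rewrite /trK -big_split; apply: eq_bigr => i _; rewrite mulrDr coordD. Qed.

Lemma trK0 : trK 0 = 0.
Proof. by rewrite /trK big1 // => i _; rewrite mulr0 coord0. Qed.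

Lemma trKB x y : trK (x - y) = trK x - trK y.
Proof. by apply/eqP; rewrite eq_sym subr_eq -trKD subrK. Qed.

Lemma trK_sum (I : Type) (r : seq I) (P : pred I) (F : I -> A) :
  trK (\sum_(j <- r | P j) F j) = \sum_(j <- r | P j) trK (F j).
Proof. by apply: (big_morph trK) => [x y|]; rewrite ?trKD ?trK0. Qed.

Lemma trK_Kmul k z : k \in K -> trK (k * z) = k * trK z.
Proof.
move=> Kk; rewrite /trK mulr_sumr; apply: eq_bigr => i _.
by rewrite mulrA -(K_central _ Kk) -mulrA coord_Kmul.
Qed.

Lemma trK_mulK x k y : k \in K -> trK (x * (k * y)) = k * trK (x * y).
Proof. by move=> Kk; rewrite mulrA -(K_central _ Kk) -mulrA trK_Kmul. Qed.

Definition Kcoord a j : Kfield := exist _ (coord a j) (coordK a j).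
Definition rmul_mx z : 'M[Kfield]_n := \matrix_(i, j) Kcoord (v i * z) j.

Lemma rmul_mxM y z : rmul_mx (y * z) = rmul_mx y *m rmul_mx z.
Proof.
apply/matrixP => i j; apply: val_inj; rewrite !mxE val_Kfield_sum /= mulrA coordM.
by apply: eq_bigr => k _; rewrite !mxE.
Qed.

Lemma rmul_mx_eq0 z : rmul_mx z = 0 -> z = 0.
Proof.
move=> z0; rewrite -[z]mul1r (coordE 1) mulr_suml big1 // => i _.
rewrite -mulrA (coordE (v i * z)) big1 ?mulr0 // => j _.
have := congr1 (fun M : 'M[Kfield]_n => val (M i j)) z0.
by rewrite !mxE /= => ->; rewrite mul0r.
Qed.

Lemma trK_mxtrace z : trK z = val (\tr (rmul_mx z)).
Proof. by rewrite /mxtrace val_Kfield_sum; apply: eq_bigr => i _; rewrite mxE. Qed.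

Lemma trKC x y : trK (x * y) = trK (y * x).
Proof. by rewrite !trK_mxtrace !rmul_mxM mxtrace_mulC. Qed.

Lemma trK_idem_eq0 x : x * x = x -> trK x = 0 -> x = 0.
Proof.
move=> xx tr0; apply: rmul_mx_eq0; apply: (mxtrace_idem_eq0 Kfield_char0).
  by rewrite -rmul_mxM xx.
by apply: val_inj; rewrite -trK_mxtrace tr0.
Qed.

Lemma trK_homog z d : homog d z -> d != 0 -> trK z = 0.
Proof.
move=> zd d0; rewrite /trK big1 // => i _.
apply: (coord_homog (g := e i + d)); first exact: homogM.
by rewrite -{1}(addr0 (e i)) (inj_eq (addrI _)) eq_sym.
Qed.

Lemma trK_comp z w d : homog d w -> trK (z * w) = trK (comp z (- d) * w).
Proof.
move=> wd; rewrite -{1}(sum_comp z) mulr_suml trK_sum.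
apply: (sum_supp1 (F := fun h x => trK (x * w))) => [h hd|]; last by rewrite mul0r trK0.
apply: (trK_homog (d := h + d)); first exact: homogM (homog_comp _ _) wd.
by rewrite addr_eq0.
Qed.

Definition trK_rad : pred A := [pred z | [forall k, trK (z * v k) == 0]].

Lemma trK_radP z : reflect (forall y, trK (z * y) = 0) (z \in trK_rad).
Proof.
apply: (iffP forallP) => [z0 y | z0 k]; last by rewrite z0.
rewrite (coordE y) mulr_sumr trK_sum big1 // => i _.
by rewrite trK_mulK ?coordK // (eqP (z0 i)) mulr0.
Qed.

Lemma trK_rad_ideal : left_ideal trK_rad.
Proof.
split.
- by apply/trK_radP => y; rewrite mul0r trK0.
- move=> x y /trK_radP x0 /trK_radP y0; apply/trK_radP => w.
  by rewrite mulrDl trKD x0 y0 addr0.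
- move=> a x /trK_radP x0; apply/trK_radP => y.
  by rewrite -mulrA trKC -mulrA x0.
Qed.

Lemma trK_nondeg z : (forall k, trK (z * v k) = 0) -> z = 0.
Proof.
move=> z0; have zrad : z \in trK_rad by apply/forallP => k; rewrite z0.
have [e0 e0rad e0_unit] := semisimple_left_ideal_unit SS trK_rad_ideal.
have e0_idem : e0 * e0 = e0 by apply: e0_unit.
have tr_e0 : trK e0 = 0 by move/trK_radP: e0rad => /(_ 1); rewrite mulr1.
by rewrite -(e0_unit z zrad) (trK_idem_eq0 e0_idem tr_e0) mulr0.
Qed.

Lemma trK_inj x y : (forall k, trK (x * v k) = trK (y * v k)) -> x = y.
Proof.
move=> xy; apply/eqP; rewrite -subr_eq0; apply/eqP/trK_nondeg => k.
by rewrite mulrBl trKB xy subrr.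
Qed.

Definition Ktr z : Kfield := exist _ (trK z) (mem_trK z).
Definition gram_mx : 'M[Kfield]_n := \matrix_(i, j) Ktr (v i * v j).

Lemma mulmx_gram_mx m (X : 'M[Kfield]_(m, n)) i l :
  val ((X *m gram_mx) i l) = trK ((\sum_k val (X i k) * v k) * v l).
Proof.
rewrite mxE val_Kfield_sum mulr_suml trK_sum; apply: eq_bigr => k _.
by rewrite -mulrA trK_Kmul ?(valP (X i k)) // !mxE.
Qed.

Lemma gram_mx_unit : gram_mx \in unitmx.
Proof.
rewrite -row_free_unit -kermx_eq0; apply/eqP/row_matrixP => i; rewrite row0.
set w := row i (kermx gram_mx).
have w_ker : w *m gram_mx = 0 by rewrite /w -row_mul mulmx_ker row0.
have w_rel : \sum_j val (w 0 j) * v j = 0.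
  by apply: trK_nondeg => k; rewrite -mulmx_gram_mx w_ker mxE.
apply/rowP => j; apply: val_inj.
by rewrite (v_free (fun j => valP (w 0 j)) w_rel j) mxE.
Qed.

Definition dual0 j := \sum_k val (invmx gram_mx j k) * v k.
Definition dual j := comp (dual0 j) (- e j).

Lemma homog_dual j : homog (- e j) (dual j). Proof. exact: homog_comp. Qed.

Lemma trK_dual0 j l : trK (dual0 j * v l) = (j == l)%:R.
Proof. by rewrite -mulmx_gram_mx mulVmx ?gram_mx_unit // mxE val_Kfield_natr. Qed.

Lemma trK_dual j l : trK (dual j * v l) = (j == l)%:R.
Proof.
rewrite (trK_comp _ (v_homog l)) /dual comp_comp (inj_eq oppr_inj).
have [elj | ne] := eqVneq (e l) (e j).
  by rewrite -elj -(trK_comp _ (v_homog l)) trK_dual0.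
have /negbTE -> : j != l by apply: contraNneq ne => ->.
by rewrite mul0r trK0.
Qed.

Lemma trK_dualM y j : trK (dual j * y) = coord y j.
Proof.
rewrite {1}(coordE y) mulr_sumr trK_sum (bigD1 j) //= trK_mulK ?coordK //.
rewrite trK_dual eqxx mulr1 big1 ?addr0 // => l lj.
by rewrite trK_mulK ?coordK // trK_dual eq_sym (negbTE lj) mulr0.
Qed.

Lemma mul_dual a j : a * dual j = \sum_i coord (v i * a) j * dual i.
Proof.
apply: trK_inj => k; rewrite -mulrA trKC -mulrA trK_dualM.
rewrite mulr_suml trK_sum (bigD1 k) //= -mulrA trK_Kmul ?coordK // trK_dual eqxx mulr1.
rewrite big1 ?addr0 // => i ik.
by rewrite -mulrA trK_Kmul ?coordK // trK_dual (negbTE ik) mulr0.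
Qed.

Lemma sum_dual_mul : \sum_i dual i * v i = 1.
Proof.
apply: trK_inj => k; rewrite mul1r mulr_suml trK_sum.
by under eq_bigr do rewrite -mulrA trK_dualM.
Qed.

Definition average (M : zmodType) (rho sig : M -> A -> M) (m : M) : M :=
  \sum_i sig (rho m (dual i)) (v i).

Lemma rBhom_average (M N : zmodType) (rhoM sigM : M -> A -> M)
    (rhoN sigN : N -> A -> N) (p : M -> N) m :
  is_rBhom rhoM sigM rhoN sigN p -> p (average rhoM sigM m) = average rhoN sigN (p m).
Proof.
case=> pD prho psig; have p0 : p 0 = 0 by apply: (addrI (p 0)); rewrite -pD !addr0.
by rewrite /average (big_morph p pD p0); apply: eq_bigr => i _; rewrite psig prho.
Qed.

Section Averaging.
Variables (M : zmodType) (rho sig : M -> A -> M).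
Hypothesis HM : is_rBmod act comp supp K rho sig.

Lemma average_invariant m : rB_invariant rho sig (average rho sig m).
Proof.
move=> a; rewrite /average (rho_suml HM) (sig_suml HM).
transitivity (\sum_i sig (rho m (a * dual i)) (v i)).
  apply: eq_bigr => i _; rewrite (rho_sig_homog HM _ _ (v_homog i)) (rho_opmul HM).
  by rewrite (opmul_homog _ (homog_dual i)) -actD addNr act0.
symmetry; transitivity (\sum_i \sum_j sig (rho m (coord (v i * a) j * dual i)) (v j)).
  apply: eq_bigr => i _; rewrite (sigM HM) {1}(coordE (v i * a)) (sig_sumr HM).
  apply: eq_bigr => j _.
  by rewrite (sig_Kmul HM _ _ (coordK _ _)) (rho_Kmul HM _ _ (coordK _ _)).
rewrite exchange_big /=; apply: eq_bigr => j _.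
by rewrite -(sig_suml HM) -(rho_sumr HM) -mul_dual.
Qed.

Lemma average_id m : rB_invariant rho sig m -> average rho sig m = m.
Proof.
move=> m_inv; rewrite /average (eq_bigr (fun i => sig m (dual i * v i))) => [|i _].
  by rewrite -(sig_sumr HM) sum_dual_mul (sig1 HM).
by rewrite m_inv (sigM HM).
Qed.

End Averaging.

End Coordinates.

Lemma rBhom_invariant_lift (M N : zmodType) (rhoM sigM : M -> A -> M)
    (rhoN sigN : N -> A -> N) (p : M -> N) x0 :
  is_rBmod act comp supp K rhoM sigM -> is_rBmod act comp supp K rhoN sigN ->
  is_rBhom rhoM sigM rhoN sigN p -> rB_invariant rhoN sigN (p x0) ->
  exists2 x, rB_invariant rhoM sigM x & p x = p x0.
Proof.
move=> HM HN p_hom px0_inv.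
have [n [v [e [v_homog v_span v_free]]]] := exists_homog_Kbasis.
exists (average e v_span rhoM sigM x0); first exact: average_invariant.
by rewrite (rBhom_average _ _ _ p_hom); apply: average_id.
Qed.

End SeparableYD.

Theorem lemma6p2 (G : zmodType) (A : algType CC)
  (act : G -> A -> A) (comp : A -> G -> A) (supp : A -> seq G)
  (K : pred A) :
  is_YD_algebra act comp supp ->
  semisimple_alg A ->
  central_subfield K ->
  invariant_sub act comp K ->
  findim_over K ->
  rB_projective act comp supp K
    (A_rho act comp supp) (@A_sig A).
Proof.
move=> YD SS CK IK FD M N rhoM sigM rhoN sigN p f HM HN p_hom p_surj f_hom.
have [x0 px0] := p_surj (f 1).
have [|x x_inv px] := rBhom_invariant_lift YD CK IK FD SS HM HN p_hom (x0 := x0).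
  by rewrite px0; apply: rBhom_one_invariant f_hom.
exists (sigM x); split; first exact: (rBhom_sig_invariant HM x_inv).
case: p_hom f_hom => _ _ psig [_ _ fsig] m.
by rewrite psig px px0 -fsig /A_sig mul1r.
Qed.
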